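(* Suppose Assumption A holds and let $\{x^k\}$ be an infinite sequence generated by Algorithm 1 with $G_k\in\mathcal{S}_{\ell,\mu}(F,x^k)$ for all $k$ (fixed $\ell\in K$, $\mu\in\mathrm{int}(K)$). Then $\{x^k\}$ has at least one accumulation point, and every accumulation point of $\{x^k\}$ is a $K$-stationary point of $\min_K F(x)$.
   Context: $K\subset\mathbb{R}^m$ is a closed, convex, pointed cone with nonempty interior; $y\preceq_K y'$ means $y'-y\in K$. $K^*=\{c:\langle c,y\rangle\ge0\ \forall y\in K\}$, and $C$ is a compact convex set with $0\notin C$, $\mathrm{cone}(C)=K^*$. $F:\mathbb{R}^n\to\mathbb{R}^m$ is differentiable with Jacobian $JF$. A point $x^*$ is $K$-stationary if $\mathrm{range}(JF(x^* ))\cap(-\mathrm{int}(K))=\emptyset$. For differentiable $\Phi$: strongly $K$-convex with $\mu\in K$ means $J\Phi(x)(y-x)+\tfrac12\|y-x\|^2\mu\preceq_K\Phi(y)-\Phi(x)$ for all $x,y$; $K$-smooth with $\ell\in K$ means $\Phi(y)-\Phi(x)\preceq_K J\Phi(x)(y-x)+\tfrac12\|y-x\|^2\ell$ for all $x,y$. Surrogate class $\mathcal{S}_{\ell,\mu}(F,x^k)$ ($\ell\in K$, $\mu\in\mathrm{int}(K)$): differentiable $G_k$ strongly $K$-convex with $\mu$ such that, with $x^{k+1}$ the minimizer of $x\mapsto\max_{c^*\in C}\langle c^*,G_k(x)\rangle$ and $H_k:=G_k-F+F(x^k)$: $F(x^{k+1})-F(x^k)\preceq_K G_k(x^{k+1})$;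 $H_k$ is $K$-smooth with $\ell$, $H_k(x^k)=0$, $JH_k(x^k)=0$. Algorithm 1: from $x^0$, for $k=0,1,\dots$ choose $G_k\in\mathcal{S}_{\ell,\mu}(F,x^k)$ and set $x^{k+1}:=\arg\min_{x}\max_{c^*\in C}\langle c^*,G_k(x)\rangle$; stop if $x^{k+1}=x^k$. Assumption A: (i) the level set $\mathcal{L}_F(x^0)=\{x:F(x)\preceq_K F(x^0)\}$ is bounded; (ii) whenever $\mathcal{K}$ is an infinite index set with $x^k\to x^*$ along $\mathcal{K}$, $G_k\in\mathcal{S}_{\ell,\mu}(F,x^k)$, and $\max_{c^*\in C}\langle c^*,G_k(x^{k+1})\rangle\to0$ along $\mathcal{K}$, then $x^*$ is $K$-stationary. *)

From HB Require Import structures.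
From mathcomp Require Import all_boot all_order all_algebra.
From mathcomp Require Import all_classical all_reals all_analysis.
Set Implicit Arguments. Unset Strict Implicit. Unset Printing Implicit Defensive.
Import Order.TTheory GRing.Theory Num.Theory.
Import numFieldNormedType.Exports.
Local Open Scope classical_set_scope.
Local Open Scope ring_scope.

Section Defs.
Variable R : realType.

Definition dotv (p : nat) (c y : 'rV[R]_p) : R := \sum_(i < p) c ord0 i * y ord0 i.
Definition sqnorm (p : nat) (v : 'rV[R]_p) : R := dotv v v.

Definition Kle (m : nat) (K : set 'rV[R]_m) (y y' : 'rV[R]_m) : Prop := K (y' - y).

Definition convex_set_ (p : nat) (A : set 'rV[R]_p) : Prop :=
  forall x y t, A x -> A y -> 0 <= t -> t <= 1 -> A (t *: x + (1 - t) *: y).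

Definition is_cone (p : nat) (A : set 'rV[R]_p) : Prop :=
  forall t x, 0 <= t -> A x -> A (t *: x).

Definition pointed (p : nat) (A : set 'rV[R]_p) : Prop :=
  forall x, A x -> A (- x) -> x = 0.

Definition good_cone (m : nat) (K : set 'rV[R]_m) : Prop :=
  [/\ closed K, is_cone K, convex_set_ K, pointed K & interior K !=set0].

Definition dual_cone (m : nat) (K : set 'rV[R]_m) : set 'rV[R]_m :=
  [set c | forall y, K y -> 0 <= dotv c y].

Definition cone_hull (m : nat) (C : set 'rV[R]_m) : set 'rV[R]_m :=
  [set y | y = 0 \/ exists t c, 0 < t /\ C c /\ y = t *: c].

Definition phiC (m : nat) (C : set 'rV[R]_m) (v : 'rV[R]_m) : R :=
  sup [set dotv c v | c in C].

Definition is_argmin (n : nat) (f : 'rV[R]_n -> R) (z : 'rV[R]_n) : Prop :=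
  forall x, f z <= f x.

Definition K_stationary (n m : nat) (K : set 'rV[R]_m)
  (F : 'rV[R]_n -> 'rV[R]_m) (xs : 'rV[R]_n) : Prop :=
  forall d : 'rV[R]_n, ~ (interior K) (- ('d F xs d)).

Definition strongly_K_convex (n m : nat) (K : set 'rV[R]_m)
  (Phi : 'rV[R]_n -> 'rV[R]_m) (mu : 'rV[R]_m) : Prop :=
  forall x y, Kle K ('d Phi x (y - x) + (2^-1 * sqnorm (y - x)) *: mu) (Phi y - Phi x).

Definition K_smooth (n m : nat) (K : set 'rV[R]_m)
  (Phi : 'rV[R]_n -> 'rV[R]_m) (l : 'rV[R]_m) : Prop :=
  forall x y, Kle K (Phi y - Phi x) ('d Phi x (y - x) + (2^-1 * sqnorm (y - x)) *: l).

Definition surrogate (n m : nat) (K C : set 'rV[R]_m) (l mu : 'rV[R]_m)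
  (F : 'rV[R]_n -> 'rV[R]_m) (xk : 'rV[R]_n) (G : 'rV[R]_n -> 'rV[R]_m) : Prop :=
  let H := fun x => G x - F x + F xk in
  (forall x, differentiable G x) /\
  strongly_K_convex K G mu /\
  (forall z, is_argmin (fun x => phiC C (G x)) z -> Kle K (F z - F xk) (G z)) /\
  K_smooth K H l /\
  H xk = 0 /\
  (forall v, 'd H xk v = 0).

Definition acc_point (n : nat) (u : nat -> 'rV[R]_n) (xs : 'rV[R]_n) : Prop :=
  exists sigma : nat -> nat, (forall j, (sigma j < sigma j.+1)%N) /\
    (fun j => u (sigma j)) @ \oo --> xs.

End Defs.

(* Each surrogate G_k vanishes at x^k, so minimality of x^{k+1} gives
   max_{c in C} <c, G_k(x^{k+1})> <= 0.  Since C generates the dual cone and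
   K is its own bidual, this makes -G_k(x^{k+1}) an element of K, and the
   majorization F(x^{k+1}) - F(x^k) <=_K G_k(x^{k+1}) yields the monotonicity
   F(x^{k+1}) <=_K F(x^k).  The iterates therefore stay in the compact level
   set L_F(x^0), which gives an accumulation point.  Along a subsequence
   converging to x^*, the scalar sequence <c, F(x^k)> (any c in C) is
   nonincreasing and converges to <c, F> at x^*, so its one-step decrements,
   which bound max_{c in C} <c, G_k(x^{k+1})> from below, tend to 0;
   Assumption A(ii) then makes x^* stationary. *)
From HB Require Import structures.
From mathcomp Require Import all_boot all_order all_algebra.
From mathcomp Require Import all_classical all_reals all_analysis.
From mathcomp Require Import ring lra.
Import Order.TTheory GRing.Theory Num.Theory.
Import numFieldNormedType.Exports.
Local Open Scope classical_set_scope.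
Local Open Scope ring_scope.

Section InnerProduct.
Context {R : realType}.

Lemma dotvC {p} (c v : 'rV[R]_p) : dotv c v = dotv v c.
Proof. by apply: eq_bigr => i _; rewrite mulrC. Qed.

Lemma dotvDr {p} (c u v : 'rV[R]_p) : dotv c (u + v) = dotv c u + dotv c v.
Proof. by rewrite /dotv -big_split; apply: eq_bigr => i _; rewrite !mxE mulrDr. Qed.

Lemma dotvBr {p} (c u v : 'rV[R]_p) : dotv c (u - v) = dotv c u - dotv c v.
Proof. by rewrite /dotv -sumrB; apply: eq_bigr => i _; rewrite !mxE mulrBr. Qed.

Lemma dotvZl {p} t (c v : 'rV[R]_p) : dotv (t *: c) v = t * dotv c v.
Proof. by rewrite /dotv mulr_sumr; apply: eq_bigr => i _; rewrite mxE mulrA. Qed.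

Lemma dotvZr {p} t (c v : 'rV[R]_p) : dotv c (t *: v) = t * dotv c v.
Proof. by rewrite dotvC dotvZl dotvC. Qed.

Lemma dotvNl {p} (c v : 'rV[R]_p) : dotv (- c) v = - dotv c v.
Proof. by rewrite -scaleN1r dotvZl mulN1r. Qed.

Lemma dotv0l {p} (v : 'rV[R]_p) : dotv 0 v = 0.
Proof. by rewrite -(scale0r 0) dotvZl mul0r. Qed.

Lemma dotv0r {p} (c : 'rV[R]_p) : dotv c 0 = 0.
Proof. by rewrite dotvC dotv0l. Qed.

Lemma sqnormZ {p} t (v : 'rV[R]_p) : sqnorm (t *: v) = t * t * sqnorm v.
Proof. by rewrite /sqnorm dotvZl dotvZr mulrA. Qed.

Lemma sqnormB {p} (a b : 'rV[R]_p) :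
  sqnorm (a - b) = sqnorm a - 2 * dotv a b + sqnorm b.
Proof.
rewrite /sqnorm /dotv mulr_sumr -sumrB -big_split /=.
by apply: eq_bigr => i _; rewrite !mxE; ring.
Qed.

Lemma sqnorm_ge0 {p} (w : 'rV[R]_p) : 0 <= sqnorm w.
Proof. by rewrite sumr_ge0 // => j _; rewrite -expr2 sqr_ge0. Qed.

Lemma sqr_coord_le_sqnorm {p} (w : 'rV[R]_p) i : w ord0 i * w ord0 i <= sqnorm w.
Proof.
rewrite /sqnorm /dotv (bigD1 i) //= lerDl sumr_ge0 // => j _.
by rewrite -expr2 sqr_ge0.
Qed.

Lemma sqnorm_le0 {p} (w : 'rV[R]_p) : sqnorm w <= 0 -> w = 0.
Proof.
move=> w_le0; apply/rowP => i; rewrite mxE; apply/eqP.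
rewrite -[_ == 0]orbb -mulf_eq0 eq_le -expr2 sqr_ge0 andbT.
by rewrite expr2 (le_trans (sqr_coord_le_sqnorm w i)).
Qed.

Lemma continuous_sum {T : topologicalType} {p} (f : 'I_p -> T -> R) :
  (forall i, continuous (f i)) -> continuous (fun v => \sum_i f i v).
Proof.
move=> fc; rewrite -fct_sumE.
elim/big_ind: _ => //; first by move=> x; apply: cst_continuous.
by move=> g h gc hc x; exact: (continuousD (gc x) (hc x)).
Qed.

Lemma continuous_dotvr {p} (c : 'rV[R]_p) : continuous (dotv c).
Proof.
apply: continuous_sum => i x.
exact: (continuousM (@cst_continuous _ _ (c ord0 i) x) (@coord_continuous R 1 p ord0 i x)).
Qed.

Lemma continuous_dotvl {p} (v : 'rV[R]_p) : continuous (fun c => dotv c v).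
Proof.
by rewrite (_ : (fun c => dotv c v) = dotv v); [|apply/funext => c; exact: dotvC];
  exact: continuous_dotvr.
Qed.

Lemma continuous_sqnorm {p} : continuous (@sqnorm R p).
Proof.
apply: continuous_sum => i x.
exact: (continuousM (@coord_continuous R 1 p ord0 i x) (@coord_continuous R 1 p ord0 i x)).
Qed.

End InnerProduct.

Lemma nonpos_of_quadratic_bound {R : realType} (a s : R) : 0 <= s ->
  (forall t, 0 < t -> t <= 1 -> 2 * t * a <= t * t * s) -> a <= 0.
Proof.
move=> s_ge0 h; rewrite leNgt; apply/negP => a_gt0.
have sa_gt0 : 0 < s + a by rewrite ltr_wpDl.
pose t := a / (s + a).
have t_gt0 : 0 < t by rewrite divr_gt0.
have t_le1 : t <= 1 by rewrite ler_pdivrMr // mul1r lerDr.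
have := h t t_gt0 t_le1.
have -> : 2 * t * a = t * (2 * a) by ring.
have -> : t * t * s = t * (t * s) by ring.
rewrite ler_pM2l // leNgt => /negP; apply.
by rewrite /t mulrAC ltr_pdivrMr //; nra.
Qed.

Section Cones.
Context {R : realType} {p : nat}.
Implicit Types (K A : set 'rV[R]_p) (v : 'rV[R]_p).

Lemma cone0 {K} : is_cone K -> K !=set0 -> K 0.
Proof. by move=> Kcone [y Ky]; rewrite -(scale0r y); apply: Kcone. Qed.

Lemma cone_add {K a b} : is_cone K -> convex_set_ K -> K a -> K b -> K (a + b).
Proof.
move=> Kcone Kcvx Ka Kb.
have half_ge0 : (0 : R) <= 2^-1 by rewrite invr_ge0 ler0n.
have half_le1 : (2 : R)^-1 <= 1 by rewrite invf_le1 ?ltr0n // ler1n.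
have -> : a + b = 2 *: (2^-1 *: a + (1 - 2^-1) *: b).
  by apply/rowP => i; rewrite !mxE; field.
exact: Kcone (ler0n _ 2) (Kcvx a b 2^-1 Ka Kb half_ge0 half_le1).
Qed.

Lemma bounded_sqnorm_sublevel v S : bounded_set [set y | sqnorm (v - y) <= S].
Proof.
have abs_le (w : R) : `|w| <= w * w + 1.
  have [w_le1|w_gt1] := lerP `|w| 1.
    by apply: le_trans w_le1 _; rewrite lerDr -expr2 sqr_ge0.
  have sq_abs : `|w| * `|w| = w * w by rewrite -normrM ger0_norm // -expr2 sqr_ge0.
  rewrite -sq_abs; nra.
rewrite /bounded_set /= /bounded_near.
near=> M => y /= vyS.
have hM : `|S| + `|S| + 2 + 2 * sqnorm v <= M.
  by near: M; apply: nbhs_pinfty_ge; rewrite num_real.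
rewrite [leLHS]/Num.norm /= mx_normrE; apply: bigmax_le => [|[i j] _] /=.
  by apply: le_trans hM; have := sqnorm_ge0 v; have := normr_ge0 S; lra.
rewrite (ord1 i) (_ : y ord0 j = v ord0 j - (v - y) ord0 j); last by rewrite !mxE; ring.
apply: le_trans (ler_normB _ _) _.
have := abs_le (v ord0 j); have := abs_le ((v - y) ord0 j).
have := sqr_coord_le_sqnorm v j; have := sqr_coord_le_sqnorm (v - y) j.
have := ler_norm S; have := normr_ge0 S; have := sqnorm_ge0 v; lra.
Unshelve. all: end_near.
Qed.

Lemma exists_nearest_point {A} v : closed A -> A !=set0 ->
  exists2 q, A q & forall y, A y -> sqnorm (v - q) <= sqnorm (v - y).
Proof.
move=> Acl [y0 Ay0].
pose f y := sqnorm (v - y).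
have fc : continuous f.
  move=> y; apply: continuous_comp; last exact: continuous_sqnorm.
  by apply: continuousB; [exact: cst_continuous | exact: cvg_id].
pose B := A `&` f @^-1` [set r | r <= f y0].
have By0 : B y0 by split => //=; exact: lexx.
have Bcp : compact B.
  apply: bounded_closed_compact.
    apply: sub_boundedr (bounded_sqnorm_sublevel v (f y0)).
    by move=> P sublevel_P y [_ /sublevel_P].
  apply: closedI Acl _; apply: preimage_closed; last exact: closed_le.
  by move=> y _; apply: fc.
have [q /set_mem[Aq _] qmin] := compact_EVT_min (ex_intro _ y0 By0) Bcp (continuous_subspaceT fc).
exists q => // y Ay; have [fy_le|fy_gt] := lerP (f y) (f y0).
  by apply: qmin; rewrite inE.
by apply: le_trans (ltW fy_gt); apply: qmin; rewrite inE.
Qed.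

Lemma nearest_point_convex {A v q} : convex_set_ A -> A q ->
  (forall y, A y -> sqnorm (v - q) <= sqnorm (v - y)) ->
  forall y, A y -> dotv (v - q) (y - q) <= 0.
Proof.
move=> Acvx Aq qmin y Ay.
apply: (nonpos_of_quadratic_bound _ (sqnorm (y - q))); first exact: sqnorm_ge0.
move=> t t_gt0 t_le1.
have := qmin _ (Acvx y q t Ay Aq (ltW t_gt0) t_le1).
have -> : v - (t *: y + (1 - t) *: q) = (v - q) - t *: (y - q).
  by apply/rowP => i; rewrite !mxE; ring.
rewrite [sqnorm (_ - t *: _)]sqnormB sqnormZ dotvZr; lra.
Qed.

Lemma bidual_cone_subset {K} : closed K -> is_cone K -> convex_set_ K -> K !=set0 ->
  dual_cone (dual_cone K) `<=` K.
Proof.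
move=> Kcl Kcone Kcvx K_neq0 v v_bidual.
have [q Kq qmin] := exists_nearest_point v Kcl K_neq0.
pose w := v - q.
have w_normal := nearest_point_convex Kcvx Kq qmin.
have wq0 : dotv w q = 0.
  have := w_normal 0 (cone0 Kcone K_neq0).
  have := w_normal (2 *: q) (Kcone 2 q (ler0n _ 2) Kq).
  by rewrite !dotvBr dotvZr dotv0r -/w; lra.
have Nw_dual : dual_cone K (- w).
  by move=> y Ky; have := w_normal y Ky; rewrite dotvBr wq0 subr0 dotvNl -/w; lra.
have v_eq : v = w + q by rewrite /w subrK.
have := v_bidual _ Nw_dual; rewrite dotvC dotvNl [in dotv w v]v_eq dotvDr wq0.
by rewrite addr0 oppr_ge0 => /sqnorm_le0 w0; rewrite v_eq w0 add0r.
Qed.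

End Cones.

Section SupportFunction.
Context {R : realType} {m : nat}.
Implicit Types (C : set 'rV[R]_m) (v : 'rV[R]_m).

Lemma phiC_set0 v : phiC set0 v = 0.
Proof. by rewrite /phiC image_set0 sup0. Qed.

Lemma phiC0 C : phiC C 0 = 0.
Proof.
have [[c Cc]|/set0P/negP/negPn/eqP ->] := pselect (C !=set0); last exact: phiC_set0.
rewrite /phiC (_ : [set _ | c' in C] = [set 0]) ?sup1 //.
apply/seteqP; split => [r [c' _ <-]|r ->] /=; first by rewrite dotv0r.
by exists c => //; rewrite dotv0r.
Qed.

Lemma dotv_le_phiC {C c} v : compact C -> C c -> dotv c v <= phiC C v.
Proof.
move=> Ccp Cc; apply: sup_upper_bound; last by exists c.
apply: compact_has_sup; first by exists (dotv c v), c.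
by apply: continuous_compact => //; apply: continuous_subspaceT; exact: continuous_dotvl.
Qed.

End SupportFunction.

Section Subsequences.
Context {R : realType} {V : normedModType R}.

Lemma cluster_subsequence (u : nat -> V) (a : V) : cluster (u @ \oo) a ->
  exists sigma : nat -> nat, (forall j, (sigma j < sigma j.+1)%N) /\
    (fun j => u (sigma j)) @ \oo --> a.
Proof.
move=> a_cluster.
have /choice[next next_spec] : forall k, exists k',
    (k < k')%N /\ `|a - u k'| < k.+1%:R^-1.
  move=> k; have u_tail : (u @ \oo) (u @` [set k' | (k < k')%N]).
    by exists k.+1 => // k' k'_gt; exists k'.
  have e_gt0 : 0 < k.+1%:R^-1 :> R by rewrite invr_gt0 ltr0Sn.
  have [_ [[k' /= k'_gt <-] u_near]] := a_cluster _ _ u_tail (nbhsx_ballx a _ e_gt0).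
  by exists k'; rewrite -ball_normE in u_near.
pose sigma j := iter j.+1 next 0%N.
have iter_ge j : (j <= iter j next 0)%N.
  by elim: j => // j IH; apply: leq_ltn_trans IH (next_spec _).1.
exists sigma; split => [j|]; first exact: (next_spec _).1.
apply/cvgrPdist_lt => e e_gt0; near=> j.
apply: lt_le_trans (next_spec (iter j next 0)).2 _.
rewrite (@le_trans _ _ (j.+1%:R^-1)) //.
  by rewrite lef_pV2 ?posrE ?ltr0Sn // ler_nat ltnS.
rewrite invf_ple ?posrE ?ltr0Sn // (@le_trans _ _ j%:R) ?ler_nat //.
by near: j; exact: nbhs_infty_ger.
Unshelve. all: end_near.
Qed.

End Subsequences.

Lemma compact_acc_point {R : realType} {n : nat} (A : set 'rV[R]_n)
    (u : nat -> 'rV[R]_n) :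
  compact A -> (forall k, A (u k)) -> exists xs, acc_point u xs.
Proof.
move=> Acp Au.
have [|xs [_ /cluster_subsequence]] := Acp (u @ \oo) _ _; last by exists xs.
by exists 0%N => // k _; exact: Au.
Qed.

Section Algorithm1.
Context {R : realType} {n m : nat}.
Context {K C : set 'rV[R]_m} {F : 'rV[R]_n -> 'rV[R]_m} {l mu : 'rV[R]_m}.
Context {x : nat -> 'rV[R]_n} {G : nat -> 'rV[R]_n -> 'rV[R]_m}.
Hypotheses (Kcl : closed K) (Kcone : is_cone K) (Kcvx : convex_set_ K)
  (K_neq0 : K !=set0).
Hypotheses (Ccp : compact C) (hullC : cone_hull C = dual_cone K).
Hypothesis Fc : continuous F.
Hypothesis surG : forall k, surrogate K C l mu F (x k) (G k).
Hypothesis argmin_x : forall k, is_argmin (fun z => phiC C (G k z)) (x k.+1).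

Lemma surrogate_at_iterate k : G k (x k) = 0.
Proof. by have [_ [_ [_ [_ [/eqP]]]]] := surG k; rewrite subrK => /eqP. Qed.

Lemma phiC_step_le0 k : phiC C (G k (x k.+1)) <= 0.
Proof. by rewrite -(phiC0 C) -(surrogate_at_iterate k); exact: argmin_x. Qed.

Lemma dual_of_generator {c} : C c -> dual_cone K c.
Proof. by move=> Cc; rewrite -hullC; right; exists 1, c; rewrite scale1r ltr01. Qed.

Lemma dotv_step_le_phiC k {c} : C c ->
  dotv c (F (x k.+1)) - dotv c (F (x k)) <= phiC C (G k (x k.+1)).
Proof.
move=> Cc; apply: le_trans (dotv_le_phiC _ Ccp Cc).
have [_ [_ [majorize _]]] := surG k.
have := dual_of_generator Cc _ (majorize _ (argmin_x k)).
by rewrite !dotvBr; lra.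
Qed.

Lemma F_step_decrease k : Kle K (F (x k.+1)) (F (x k)).
Proof.
apply: (bidual_cone_subset Kcl Kcone Kcvx K_neq0) => c.
rewrite -hullC dotvC => -[->|[t [c' [t_gt0 [Cc' ->]]]]]; first by rewrite dotv0l.
rewrite dotvZl pmulr_rge0 // dotvBr subr_ge0 -subr_le0.
exact: le_trans (dotv_step_le_phiC k Cc') (phiC_step_le0 k).
Qed.

Lemma iterates_in_level_set k : Kle K (F (x k)) (F (x 0%N)).
Proof.
elim: k => [|k IH]; first by rewrite /Kle subrr; exact: cone0.
rewrite /Kle -[F (x 0%N)](subrK (F (x k))) -addrA addrC.
exact: cone_add Kcone Kcvx (F_step_decrease k) IH.
Qed.

Lemma exists_acc_point : bounded_set [set z | Kle K (F z) (F (x 0%N))] ->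
  exists xs, acc_point x xs.
Proof.
move=> level_bd; apply: (compact_acc_point [set z | Kle K (F z) (F (x 0%N))]).
  apply: bounded_closed_compact => //; rewrite /Kle.
  apply: (preimage_closed (f := fun z => F (x 0%N) - F z)) => // z _.
  apply: continuousB; [exact: cst_continuous | exact: Fc].
move=> k; exact: iterates_in_level_set.
Qed.

Lemma phiC_step_cvg0 {sigma : nat -> nat} {xs : 'rV[R]_n} :
  (forall j, (sigma j < sigma j.+1)%N) -> (fun j => x (sigma j)) @ \oo --> xs ->
  (fun j => phiC C (G (sigma j) (x (sigma j).+1))) @ \oo --> (0 : R).
Proof.
move=> sigma_incr x_cvg.
have [[c Cc]|/set0P/negP/negPn/eqP C0] := pselect (C !=set0); last first.
  rewrite C0 (_ : (fun j => phiC set0 _) = fun=> 0); first exact: cvg_cst.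
  by apply/funext => j; rewrite phiC_set0.
pose a k := dotv c (F (x k)).
have a_noninc : nonincreasing_seq a.
  apply/nonincreasing_seqP => k; rewrite -subr_le0.
  exact: le_trans (dotv_step_le_phiC k Cc) (phiC_step_le0 k).
have a_cvg : (fun j => a (sigma j)) @ \oo --> dotv c (F xs).
  apply: (@cvg_comp _ _ _ (fun j => x (sigma j)) (fun z => dotv c (F z)) _ (nbhs xs)).
    exact: x_cvg.
  exact: continuous_comp (Fc xs) (continuous_dotvr c (F xs)).
apply: (@squeeze_cvgr _ _ _ _ (fun j => a (sigma j.+1) - a (sigma j)) (fun=> 0)).
- near=> j; rewrite phiC_step_le0 andbT.
  apply: le_trans (dotv_step_le_phiC (sigma j) Cc); rewrite lerD2r.
  exact: a_noninc (sigma_incr j).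
- rewrite -(subrr (dotv c (F xs))); apply: cvgB => //.
  by rewrite (cvg_shiftS (fun j => a (sigma j))).
- exact: cvg_cst.
Unshelve. all: end_near.
Qed.

End Algorithm1.

Theorem theorem1 (R : realType) (n m : nat)
  (K C : set 'rV[R]_m) (F : 'rV[R]_n -> 'rV[R]_m) (l mu : 'rV[R]_m)
  (x : nat -> 'rV[R]_n) (G : nat -> 'rV[R]_n -> 'rV[R]_m) :
  good_cone K ->
  compact C -> convex_set_ C -> ~ C 0 -> cone_hull C = dual_cone K ->
  (forall z, differentiable F z) ->
  K l -> interior K mu ->
  (forall k, surrogate K C l mu F (x k) (G k)) ->
  (forall k, is_argmin (fun z => phiC C (G k z)) (x k.+1)) ->
  (forall k, x k.+1 <> x k) ->
  bounded_set [set z | Kle K (F z) (F (x 0%N))] ->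
  (forall (sigma : nat -> nat) (xs : 'rV[R]_n),
      (forall j, (sigma j < sigma j.+1)%N) ->
      (fun j => x (sigma j)) @ \oo --> xs ->
      (fun j => phiC C (G (sigma j) (x (sigma j).+1))) @ \oo --> (0 : R) ->
      K_stationary K F xs) ->
  (exists xs, acc_point x xs) /\
  (forall xs, acc_point x xs -> K_stationary K F xs).
Proof.
move=> [Kcl Kcone Kcvx _ [y0 /interior_subset Ky0]] Ccp _ _ hullC Fd _ _
  surG argmin_x _ level_bd assumptionA2.
have Fc : continuous F := fun z => differentiable_continuous (Fd z).
have K_neq0 : K !=set0 by exists y0.
split; first exact: (exists_acc_point Kcl Kcone Kcvx K_neq0 Ccp hullC Fc surG argmin_x).
move=> xs [sigma [sigma_incr x_cvg]].
apply: (assumptionA2 _ _ sigma_incr x_cvg).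
exact: (phiC_step_cvg0 Ccp hullC Fc surG argmin_x sigma_incr x_cvg).
Qed.
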